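(* Let $A$ and $B$ be nonempty closed subsets of a complete metric space $(X,\rho)$ such that the ordered pair $(A,B)$ has the $BUC$ property. Let $T:A\cup B\to A\cup B$ be a cyclic map and suppose there exists $k\in(0,1)$ such that $$\rho(Tx,Ty)\le k\,\rho(x,y)+(1-k)\,\mathrm{dist}(A,B)\quad\text{for all }x\in A,\ y\in B.$$ Then $T$ has a unique best proximity point $x$ in $A$, and for every $x_0\in A$ the sequence $\{T^{2n}x_0\}_{n=1}^\infty$ converges to $x$. Moreover $T$ has at least one best proximity point in $B$, and if the ordered pair $(B,A)$ also has the $BUC$ property, then the best proximity point of $T$ in $B$ is unique.
   Context: $\mathrm{dist}(A,B)=\inf\{\rho(a,b):a\in A,\ b\in B\}$. A map $T:A\cup B\to A\cup B$ is cyclic if $T(A)\subseteq B$ and $T(B)\subseteq A$. A point $x\in A$ (resp. $x\in B$) is a best proximity point of $T$ in $A$ (resp. in $B$) if $\rho(x,Tx)=\mathrm{dist}(A,B)$. The ordered pair $(A,B)$ has the bounded $UC$ property ($BUC$) if for all bounded sequences $\{x_n\},\{z_n\}\subset A$ and every sequence $\{y_n\}\subset B$ with $\lim_n\rho(x_n,y_n)=\lim_n\rho(z_n,y_n)=\mathrm{dist}(A,B)$ one has $\lim_n\rho(x_n,z_n)=0$; the property for $(B,A)$ is defined with the roles of $A$ and $B$ interchanged. *)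

From Stdlib Require Import Reals.
From Coquelicot Require Import Coquelicot.
Open Scope R_scope.

Definition is_metric {X : Type} (rho : X -> X -> R) : Prop :=
  (forall x y, 0 <= rho x y) /\
  (forall x y, rho x y = 0 <-> x = y) /\
  (forall x y, rho x y = rho y x) /\
  (forall x y z, rho x z <= rho x y + rho y z).

Definition converges_to {X : Type} (rho : X -> X -> R) (u : nat -> X) (x : X) : Prop :=
  forall eps, 0 < eps -> exists N, forall n, (N <= n)%nat -> rho (u n) x < eps.

Definition cauchy_seq {X : Type} (rho : X -> X -> R) (u : nat -> X) : Prop :=
  forall eps, 0 < eps -> exists N, forall n m, (N <= n)%nat -> (N <= m)%nat ->
    rho (u n) (u m) < eps.

Definition complete_metric {X : Type} (rho : X -> X -> R) : Prop :=
  forall u, cauchy_seq rho u -> exists x, converges_to rho u x.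

Definition closed_in {X : Type} (rho : X -> X -> R) (A : X -> Prop) : Prop :=
  forall u x, (forall n, A (u n)) -> converges_to rho u x -> A x.

Definition nonempty {X : Type} (A : X -> Prop) : Prop := exists x, A x.

Definition bounded_sq {X : Type} (rho : X -> X -> R) (u : nat -> X) : Prop :=
  exists M, forall n m, rho (u n) (u m) <= M.

Definition distAB {X : Type} (rho : X -> X -> R) (A B : X -> Prop) : R :=
  real (Glb_Rbar (fun r => exists a b, A a /\ B b /\ r = rho a b)).

Definition cyclic_map {X : Type} (A B : X -> Prop) (T : X -> X) : Prop :=
  (forall x, A x -> B (T x)) /\ (forall x, B x -> A (T x)).

Definition best_prox_point {X : Type} (rho : X -> X -> R) (A B : X -> Prop)
  (T : X -> X) (x : X) : Prop :=
  rho x (T x) = distAB rho A B.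

Definition BUC {X : Type} (rho : X -> X -> R) (A B : X -> Prop) : Prop :=
  forall (x z y : nat -> X),
    (forall n, A (x n)) -> (forall n, A (z n)) -> (forall n, B (y n)) ->
    bounded_sq rho x -> bounded_sq rho z ->
    is_lim_seq (fun n => rho (x n) (y n)) (distAB rho A B) ->
    is_lim_seq (fun n => rho (z n) (y n)) (distAB rho A B) ->
    is_lim_seq (fun n => rho (x n) (z n)) 0.

From Stdlib Require Import Reals Lra Lia Psatz Classical IndefiniteDescription.
From Coquelicot Require Import Coquelicot.
Open Scope R_scope.

(* - Applied to constant sequences, BUC says that two points of [U] at
     distance [d] from a common point of [V] coincide. Hence a best proximity
     point [p] of [U] satisfies [T (T p) = p], and there is at most one.
   - Along an orbit, the excess [rho - d] of distances between points of
     opposite sets contracts by the factor [k] at each step. This keeps the odd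
     orbit points in a ball around [x0] and makes even and odd points far along
     the orbit almost at distance [d]; BUC then makes the even orbit Cauchy.
   - Its limit [p] lies in [U] (closedness) and is a best proximity point,
     being approximated by the images of the almost-optimal odd orbit points.
   The main theorem combines these facts for (A,B), and, after exchanging the
   roles of the two sets, for (B,A); the point [T p] is a best proximity
   point in [B]. *)


Section MetricFacts.
Context {X : Type} (rho : X -> X -> R) (Hmet : is_metric rho).

Lemma rho_nonneg x y : 0 <= rho x y.
Proof. apply (proj1 Hmet). Qed.

Lemma rho_eq0 x y : rho x y = 0 -> x = y.
Proof. apply (proj1 (proj2 Hmet)). Qed.

Lemma rho_sym x y : rho x y = rho y x.
Proof. apply (proj1 (proj2 (proj2 Hmet))). Qed.

Lemma rho_tri x y z : rho x z <= rho x y + rho y z.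
Proof. apply (proj2 (proj2 (proj2 Hmet))). Qed.

Lemma distAB_spec (A B : X -> Prop) : nonempty A -> nonempty B ->
  0 <= distAB rho A B /\ forall a b, A a -> B b -> distAB rho A B <= rho a b.
Proof.
  intros [a0 Ha0] [b0 Hb0]. unfold distAB.
  set (S := fun r => exists a b, A a /\ B b /\ r = rho a b).
  destruct (Glb_Rbar_correct S) as [Hlb Hglb].
  assert (Hlow : forall a b, A a -> B b -> Rbar_le (Glb_Rbar S) (rho a b))
    by (intros a b Ha Hb; apply Hlb; exists a, b; auto).
  assert (H0 : Rbar_le 0 (Glb_Rbar S)).
  { apply Hglb. intros r [a [b [_ [_ ->]]]]. apply rho_nonneg. }
  specialize (Hlow a0 b0 Ha0 Hb0) as Hab0.
  destruct (Glb_Rbar S); simpl in *; tauto.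
Qed.

Lemma distAB_nonneg (A B : X -> Prop) :
  nonempty A -> nonempty B -> 0 <= distAB rho A B.
Proof. intros HA HB. apply (distAB_spec A B HA HB). Qed.

Lemma distAB_le (A B : X -> Prop) :
  nonempty A -> nonempty B -> forall a b, A a -> B b -> distAB rho A B <= rho a b.
Proof. intros HA HB. apply (distAB_spec A B HA HB). Qed.

Lemma distAB_sym (A B : X -> Prop) : distAB rho B A = distAB rho A B.
Proof.
  unfold distAB. f_equal. apply Glb_Rbar_eqset.
  intros r; split; intros [a [b [Ha [Hb ->]]]]; exists b, a; rewrite rho_sym; auto.
Qed.

Lemma bounded_of_center (u : nat -> X) (c : X) (K : R) :
  (forall n, rho (u n) c <= K) -> bounded_sq rho u.
Proof.
  intros Hu. exists (2 * K). intros n m.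
  pose proof (rho_tri (u n) c (u m)). rewrite (rho_sym c) in *.
  pose proof (Hu n). pose proof (Hu m). lra.
Qed.

Lemma not_cauchy_separated (u : nat -> X) :
  ~ cauchy_seq rho u ->
  exists eps, 0 < eps /\ exists f g : nat -> nat, forall N,
    (N <= f N)%nat /\ (N <= g N)%nat /\ eps <= rho (u (f N)) (u (g N)).
Proof.
  intros Hnc. apply NNPP; intro Hno. apply Hnc. intros eps Heps.
  apply NNPP; intro HnoN. apply Hno. exists eps; split; [exact Heps|].
  assert (Hpair : forall N, exists nm : nat * nat,
    (N <= fst nm)%nat /\ (N <= snd nm)%nat /\ eps <= rho (u (fst nm)) (u (snd nm))).
  { intro N. apply NNPP; intro HN. apply HnoN. exists N. intros n m Hn Hm.
    apply Rnot_le_lt. intro Hle. apply HN. exists (n, m). auto. }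
  destruct (functional_choice _ Hpair) as [h Hh].
  exists (fun N => fst (h N)), (fun N => snd (h N)). exact Hh.
Qed.

End MetricFacts.

Lemma geom_eventually_small (k K : R) : 0 <= k < 1 ->
  forall eps, 0 < eps -> exists N, forall n, (N <= n)%nat -> k ^ n * K < eps.
Proof.
  intros Hk eps Heps.
  assert (Hlim : is_lim_seq (fun n => k ^ n * K) 0).
  { replace (Finite 0) with (Rbar_mult 0 K) by (simpl; f_equal; ring).
    apply is_lim_seq_scal_r, is_lim_seq_geom. rewrite Rabs_right; lra. }
  apply is_lim_seq_spec in Hlim. destruct (Hlim (mkposreal eps Heps)) as [N HN].
  exists N. intros n Hn. specialize (HN n Hn). simpl in HN.
  rewrite Rminus_0_r in HN. apply Rabs_lt_between in HN. lra.
Qed.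

Lemma pow_antitone (k : R) (m n : nat) : 0 <= k <= 1 -> (m <= n)%nat -> k ^ n <= k ^ m.
Proof.
  intros Hk Hmn. induction Hmn as [|n _ IH]; [lra|].
  simpl. pose proof (pow_le k n (proj1 Hk)). nra.
Qed.

Lemma is_lim_seq_squeeze_above (u : nat -> R) (d : R) :
  (forall n, d <= u n) ->
  (forall eps, 0 < eps -> exists N, forall n, (N <= n)%nat -> u n < d + eps) ->
  is_lim_seq u d.
Proof.
  intros Hlow Hup. apply is_lim_seq_spec. intros eps.
  destruct (Hup eps (cond_pos eps)) as [N HN]. exists N. intros n Hn.
  specialize (HN n Hn). specialize (Hlow n). rewrite Rabs_right; lra.
Qed.

Lemma is_lim_seq_const_0 (c : R) : is_lim_seq (fun _ : nat => c) 0 -> c = 0.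
Proof.
  intros H. apply is_lim_seq_unique in H. rewrite Lim_seq_const in H.
  injection H; auto.
Qed.

Section CyclicContraction.
Variables (X : Type) (rho : X -> X -> R) (U V : X -> Prop) (T : X -> X) (k : R).
Hypothesis Hmet : is_metric rho.
Hypotheses (HUne : nonempty U) (HVne : nonempty V).
Hypotheses (HUV : forall u, U u -> V (T u)) (HVU : forall v, V v -> U (T v)).
Hypothesis Hk : 0 < k < 1.
Local Notation d := (distAB rho U V).
Hypothesis Hcontr : forall u v, U u -> V v ->
  rho (T u) (T v) <= k * rho u v + (1 - k) * d.

Definition opposite (u v : X) : Prop := (U u /\ V v) \/ (V u /\ U v).

Lemma opposite_T u v : opposite u v -> opposite (T u) (T v).
Proof. intros [[Hu Hv]|[Hu Hv]]; [right|left]; auto. Qed.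

Lemma opposite_dist_le u v : opposite u v -> d <= rho u v.
Proof.
  intros [[Hu Hv]|[Hu Hv]]; [|rewrite (rho_sym rho Hmet)];
    apply (distAB_le rho Hmet); auto.
Qed.

Lemma opposite_contr u v : opposite u v ->
  rho (T u) (T v) <= k * rho u v + (1 - k) * d.
Proof.
  intros [[Hu Hv]|[Hu Hv]]; [auto|].
  rewrite (rho_sym rho Hmet (T u)), (rho_sym rho Hmet u). auto.
Qed.

Lemma iter_excess_contr (j : nat) u v : opposite u v ->
  rho (Nat.iter j T u) (Nat.iter j T v) - d <= k ^ j * (rho u v - d).
Proof.
  intros Huv.
  assert (Hopp : forall j, opposite (Nat.iter j T u) (Nat.iter j T v)).
  { induction j0 as [|j0 IH]; [exact Huv|apply opposite_T, IH]. }
  induction j as [|j IH]; simpl; [lra|].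
  pose proof (opposite_contr _ _ (Hopp j)). nra.
Qed.

Hypothesis Hbuc : BUC rho U V.

(* BUC applied to constant sequences: two points of [U] at distance [d]
   from a common point of [V] coincide. *)
Lemma buc_points p q y : U p -> U q -> V y ->
  rho p y = d -> rho q y = d -> p = q.
Proof.
  intros Hp Hq Hy Hpy Hqy.
  assert (Hlim := Hbuc (fun _ => p) (fun _ => q) (fun _ => y)
    (fun _ => Hp) (fun _ => Hq) (fun _ => Hy)
    (bounded_of_center rho Hmet _ p (rho p p) (fun _ => Rle_refl _))
    (bounded_of_center rho Hmet _ q (rho q q) (fun _ => Rle_refl _))).
  simpl in Hlim. rewrite Hpy, Hqy in Hlim.
  apply (rho_eq0 rho Hmet), is_lim_seq_const_0, Hlim; apply is_lim_seq_const.
Qed.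

Lemma best_prox_T2_fixed p : U p -> rho p (T p) = d -> T (T p) = p.
Proof.
  intros Hp Hpd. apply (buc_points _ _ (T p)); auto.
  apply Rle_antisym; [|apply (distAB_le rho Hmet); auto].
  rewrite (rho_sym rho Hmet). specialize (Hcontr p (T p) Hp (HUV p Hp)). nra.
Qed.

Lemma best_prox_unique p q : U p -> rho p (T p) = d ->
  U q -> rho q (T q) = d -> p = q.
Proof.
  intros Hp Hpd Hq Hqd.
  pose proof (best_prox_T2_fixed p Hp Hpd) as Fp.
  pose proof (best_prox_T2_fixed q Hq Hqd) as Fq.
  assert (Hpq : rho p (T q) <= k * rho (T p) q + (1 - k) * d).
  { rewrite <- Fp at 1. rewrite (rho_sym rho Hmet (T p) q), (rho_sym rho Hmet _ (T q)).
    apply Hcontr; auto. }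
  assert (Hqp : rho (T p) q <= k * rho p (T q) + (1 - k) * d).
  { rewrite <- Fq at 1. apply Hcontr; auto. }
  pose proof (distAB_le rho Hmet U V HUne HVne p (T q) Hp (HUV _ Hq)) as Hpq_low.
  pose proof (distAB_le rho Hmet U V HUne HVne q (T p) Hq (HUV _ Hp)) as Hqp_low.
  rewrite (rho_sym rho Hmet q) in Hqp_low.
  apply (buc_points _ _ (T q)); auto. nra.
Qed.

Lemma buc_cauchy (y z : nat -> X) :
  (forall n, U (y n)) -> (forall n, V (z n)) -> bounded_sq rho y ->
  (forall eps, 0 < eps -> exists N, forall n m, (N <= n)%nat -> (N <= m)%nat ->
     rho (y n) (z m) < d + eps) ->
  cauchy_seq rho y.
Proof.
  intros Hy Hz Hbd Hclose. apply NNPP; intro Hnc.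
  destruct (not_cauchy_separated rho y Hnc) as [eps [Heps [f [g Hfg]]]].
  assert (Hlim : forall h : nat -> nat, (forall N, (N <= h N)%nat) ->
    is_lim_seq (fun N => rho (y (h N)) (z (f N))) d).
  { intros h Hh. apply is_lim_seq_squeeze_above.
    - intros N. apply (distAB_le rho Hmet); auto.
    - intros e He. destruct (Hclose e He) as [N HN]. exists N. intros n Hn.
      apply HN; [specialize (Hh n)|specialize (Hfg n)]; lia. }
  assert (Hsub : forall h : nat -> nat, bounded_sq rho (fun N => y (h N))).
  { intros h. destruct Hbd as [K HK]. exists K. auto. }
  assert (Hsep := Hbuc (fun N => y (f N)) (fun N => y (g N)) (fun N => z (f N))
    (fun N => Hy _) (fun N => Hy _) (fun N => Hz _) (Hsub f) (Hsub g)
    (Hlim f (fun N => proj1 (Hfg N))) (Hlim g (fun N => proj1 (proj2 (Hfg N))))).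
  apply is_lim_seq_spec in Hsep. destruct (Hsep (mkposreal eps Heps)) as [N HN].
  specialize (HN N (le_n N)). specialize (Hfg N). simpl in HN.
  rewrite Rminus_0_r, Rabs_right in HN by apply Rle_ge, (rho_nonneg rho Hmet). lra.
Qed.

Lemma best_prox_of_approx p : U p ->
  (forall eps, 0 < eps -> exists a, V a /\ rho (T a) p < eps /\ rho a (T a) < d + eps) ->
  rho p (T p) = d.
Proof.
  intros Hp Happrox.
  apply Rle_antisym; [|apply (distAB_le rho Hmet); auto].
  apply Rle_plus_epsilon. intros e He.
  destruct (Happrox (e / 3)) as [a [Ha [Hap Haa]]]; [lra|].
  pose proof (rho_tri rho Hmet p (T a) (T p)).
  pose proof (rho_tri rho Hmet a (T a) p).
  pose proof (opposite_contr a p (or_intror (conj Ha Hp))).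
  pose proof (rho_nonneg rho Hmet a p).
  rewrite (rho_sym rho Hmet p (T a)) in *. nra.
Qed.

Hypotheses (Hcomp : complete_metric rho) (HUcl : closed_in rho U).
Variable x0 : X.
Hypothesis Hx0 : U x0.
Local Notation orbit n := (Nat.iter n T x0).
Local Notation gap := (rho x0 (T x0) - d).

Lemma orbit_parity n : U (orbit (2 * n)) /\ V (orbit (S (2 * n))).
Proof.
  induction n as [|n [IHe IHo]]; [simpl; auto|].
  replace (2 * S n)%nat with (S (S (2 * n))) by lia. simpl. auto.
Qed.

Lemma orbit_opposite n : opposite (orbit n) (orbit (S n)).
Proof. induction n as [|n IH]; [left; auto|apply opposite_T, IH]. Qed.

Lemma orbit_shift j n : orbit (j + n) = Nat.iter j T (orbit n).
Proof. apply Nat.iter_add. Qed.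

Lemma orbit_step n : d <= rho (orbit n) (orbit (S n)) <= d + k ^ n * gap.
Proof.
  split; [apply opposite_dist_le, orbit_opposite|].
  rewrite Nat.iter_succ_r.
  pose proof (iter_excess_contr n x0 (T x0) (orbit_opposite 0)). lra.
Qed.

Lemma gap_nonneg : 0 <= gap.
Proof. pose proof (opposite_dist_le x0 (T x0) (orbit_opposite 0)). lra. Qed.

Lemma pow_k_le_1 n : 0 <= k ^ n <= 1.
Proof.
  split; [apply pow_le; lra|].
  rewrite <- (pow1 n). apply pow_incr. lra.
Qed.

Local Notation M := ((2 * d + gap + rho (T x0) x0) / (1 - k)).

Lemma odd_orbit_bounded n : rho (orbit (S (2 * n))) x0 <= M.
Proof.
  assert (Hnext : rho (orbit (S (S (2 * n)))) (T x0)
                  <= k * rho (orbit (S (2 * n))) x0 + (1 - k) * d).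
  { apply opposite_contr. right. split; [apply orbit_parity|exact Hx0]. }
  pose proof (rho_tri rho Hmet (orbit (S (2 * n))) (orbit (S (S (2 * n)))) x0).
  pose proof (rho_tri rho Hmet (orbit (S (S (2 * n)))) (T x0) x0).
  pose proof (orbit_step (S (2 * n))). pose proof (pow_k_le_1 (S (2 * n))).
  pose proof gap_nonneg. pose proof (distAB_nonneg rho Hmet U V HUne HVne).
  apply (Rmult_le_reg_l (1 - k)); [lra|].
  replace ((1 - k) * M) with (2 * d + gap + rho (T x0) x0) by (field; lra). nra.
Qed.

Lemma M_nonneg : 0 <= M.
Proof. eapply Rle_trans; [apply (rho_nonneg rho Hmet)|apply (odd_orbit_bounded 0)]. Qed.

Lemma even_odd_close N a b : (N <= a)%nat -> (N <= b)%nat ->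
  rho (orbit (2 * a)) (orbit (S (2 * b))) <= d + k ^ N * M.
Proof.
  intros Ha Hb. pose proof M_nonneg.
  assert (Hshift : forall j n, (N <= j)%nat ->
    rho (orbit (j + S (2 * n))) (orbit j) <= d + k ^ N * M).
  { intros j n Hj. rewrite orbit_shift.
    assert (Hopp : opposite (orbit (S (2 * n))) x0)
      by (right; split; [apply orbit_parity|exact Hx0]).
    pose proof (iter_excess_contr j _ _ Hopp). pose proof (odd_orbit_bounded n).
    pose proof (pow_antitone k N j ltac:(lra) Hj). pose proof (pow_k_le_1 j).
    pose proof (distAB_nonneg rho Hmet U V HUne HVne).
    nra. }
  destruct (Compare_dec.le_lt_dec a b) as [Hab|Hab].
  - replace (S (2 * b)) with (2 * a + S (2 * (b - a)))%nat by lia.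
    rewrite (rho_sym rho Hmet). apply Hshift. lia.
  - replace (2 * a)%nat with (S (2 * b) + S (2 * (a - b - 1)))%nat by lia. apply Hshift. lia.
Qed.

(* Hence BUC applies with the odd orbit as companion sequence. *)
Lemma even_orbit_cauchy : cauchy_seq rho (fun n => orbit (2 * n)).
Proof.
  apply (buc_cauchy _ (fun n => orbit (S (2 * n)))).
  - intro n. apply orbit_parity.
  - intro n. apply orbit_parity.
  - apply (bounded_of_center rho Hmet _ x0 (d + gap + M)). intros n.
    pose proof (rho_tri rho Hmet (orbit (2 * n)) (orbit (S (2 * n))) x0).
    pose proof (orbit_step (2 * n)). pose proof (pow_k_le_1 (2 * n)).
    pose proof gap_nonneg. pose proof (odd_orbit_bounded n). nra.
  - intros eps Heps. destruct (geom_eventually_small k M ltac:(lra) eps Heps) as [N HN].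
    exists N. intros n m Hn Hm. pose proof (even_odd_close N n m Hn Hm).
    specialize (HN N (le_n N)). lra.
Qed.

Lemma even_orbit_best_prox : exists p, U p /\ rho p (T p) = d /\
  converges_to rho (fun n => orbit (2 * n)) p.
Proof.
  destruct (Hcomp _ even_orbit_cauchy) as [p Hconv].
  assert (Hp : U p) by (apply (HUcl _ p (fun n => proj1 (orbit_parity n)) Hconv)).
  exists p. repeat split; [exact Hp| |exact Hconv].
  apply best_prox_of_approx; [exact Hp|]. intros eps Heps.
  destruct (Hconv eps Heps) as [N1 HN1].
  destruct (geom_eventually_small k gap ltac:(lra) eps Heps) as [N2 HN2].
  exists (orbit (S (2 * (N1 + N2)))). split; [apply orbit_parity|split].
  - change (T (orbit (S (2 * (N1 + N2))))) with (orbit (S (S (2 * (N1 + N2))))).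
    replace (S (S (2 * (N1 + N2)))) with (2 * S (N1 + N2))%nat by lia. apply HN1. lia.
  - change (T (orbit (S (2 * (N1 + N2))))) with (orbit (S (S (2 * (N1 + N2))))).
    pose proof (orbit_step (S (2 * (N1 + N2)))). pose proof (HN2 (S (2 * (N1 + N2))) ltac:(lia)).
    lra.
Qed.

End CyclicContraction.

Theorem theorem31 (X : Type) (rho : X -> X -> R) (A B : X -> Prop) (T : X -> X)
  (Hmet : is_metric rho) (Hcomp : complete_metric rho)
  (HAne : nonempty A) (HBne : nonempty B)
  (HAcl : closed_in rho A) (HBcl : closed_in rho B)
  (HBUC : BUC rho A B) (Hcyc : cyclic_map A B T)
  (Hk : exists k, 0 < k < 1 /\
     forall x y, A x -> B y ->
       rho (T x) (T y) <= k * rho x y + (1 - k) * distAB rho A B) :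
  (exists x, A x /\ best_prox_point rho A B T x /\
     (forall x', A x' -> best_prox_point rho A B T x' -> x' = x) /\
     (forall x0, A x0 -> converges_to rho (fun n => Nat.iter (2 * n) T x0) x)) /\
  (exists y, B y /\ best_prox_point rho A B T y) /\
  (BUC rho B A ->
     forall y1 y2, B y1 -> best_prox_point rho A B T y1 ->
                   B y2 -> best_prox_point rho A B T y2 -> y1 = y2).
Proof.
  destruct Hk as [k [Hk01 Hcontr]]. destruct Hcyc as [HAB HBA].
  unfold best_prox_point.
  assert (Horbit : forall x0, A x0 -> exists p, A p /\ rho p (T p) = distAB rho A B /\
            converges_to rho (fun n => Nat.iter (2 * n) T x0) p)
    by (intros; apply (even_orbit_best_prox X rho A B T k); auto).
  pose proof HAne as [a0 Ha0]. destruct (Horbit a0 Ha0) as [p [Hp [Hpd _]]].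
  assert (HcontrBA : forall u v, B u -> A v ->
            rho (T u) (T v) <= k * rho u v + (1 - k) * distAB rho B A).
  { intros u v Hu Hv. rewrite (distAB_sym rho Hmet), (rho_sym rho Hmet), (rho_sym rho Hmet u).
    auto. }
  split; [|split].
  - exists p. repeat split; auto.
    + intros x' Hx' Hx'd. apply (best_prox_unique X rho A B T k); auto.
    + intros x0 Hx0. destruct (Horbit x0 Hx0) as [q [Hq [Hqd Hconv]]].
      replace p with q; [exact Hconv|]. apply (best_prox_unique X rho A B T k); auto.
  - exists (T p). split; [auto|].
    rewrite (best_prox_T2_fixed X rho A B T k), (rho_sym rho Hmet); auto.
  - intros HBUC' y1 y2 Hy1 Hy1d Hy2 Hy2d.
    rewrite <- (distAB_sym rho Hmet A B) in Hy1d, Hy2d.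
    apply (best_prox_unique X rho B A T k); auto.
Qed.
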